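(* Let $p,q\in(0,1/2)$ with $\frac{\log p}{\log q}\notin\mathbb Q$. Then for any $r>0$ and any finite word $\mathbf i\in I^*$, $$\lim_{t\to+\infty}\Delta_{[0,r]}\big(t(K_{pq}-S_{\mathbf i}(0))\big)=\lim_{t\to+\infty}\Delta_{[-r,0]}\big(t(K_{pq}-S_{\mathbf i}(1))\big)=0.$$
   Context: For $p,q\in(0,1/2)$ let $S_1(x)=px$, $S_2(x)=qx$, $S_3(x)=px+1-p$, $S_4(x)=qx+1-q$, and let $K_{pq}$ be the attractor of $\{S_1,S_2,S_3,S_4\}$ (the unique nonempty compact $K\subset\mathbb R$ with $K=\bigcup_{i=1}^4S_i(K)$). $I=\{1,2,3,4\}$, $I^*=\bigcup_{n\ge1}I^n$ is the set of finite words, and for $\mathbf i=i_1\dots i_n$, $S_{\mathbf i}=S_{i_1}\circ\cdots\circ S_{i_n}$. For a set $X\subset\mathbb R$ and $s\in\mathbb R$, $X-s=\{x-s:x\in X\}$ and $tX=\{tx:x\in X\}$. For $a<b$ and compact $X\subset\mathbb R$, $\Delta_{[a,b]}(X)=d_H(X\cap[a,b],[a,b])$, where $d_H$ is the Hausdorff distance. *)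

From HB Require Import structures.
From mathcomp Require Import all_boot all_order all_algebra.
From mathcomp Require Import all_classical all_reals all_analysis.
Set Implicit Arguments. Unset Strict Implicit. Unset Printing Implicit Defensive.
Import Order.TTheory GRing.Theory Num.Theory.
Import numFieldTopology.Exports numFieldNormedType.Exports.
Local Open Scope classical_set_scope.
Local Open Scope ring_scope.

Section Defs.
Variable R : realType.

(* The four maps; index i : 'I_4 with values 0,1,2,3 stands for S_1,...,S_4. *)
Definition Smap (p q : R) (i : 'I_4) (x : R) : R :=
  match val i with
  | 0%N => p * x
  | 1%N => q * x
  | 2%N => p * x + 1 - p
  | _ => q * x + 1 - q
  end.

Definition Sword (p q : R) (w : seq 'I_4) : R -> R :=
  foldr (fun i f => Smap p q i \o f) id w.

Definition is_attractor (p q : R) (K : set R) : Prop :=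
  [/\ compact K, K !=set0 & K = \bigcup_(i in [set: 'I_4]) (Smap p q i @` K)].

(* distance from a point to a set, in extended reals (+oo for the empty set) *)
Definition edist (x : R) (B : set R) : \bar R :=
  ereal_inf [set (`|x - b|)%:E | b in B].

Definition hausdorff_dist (A B : set R) : \bar R :=
  Order.max (ereal_sup [set edist a B | a in A])
            (ereal_sup [set edist b A | b in B]).

Definition cint (a b : R) : set R := [set x | a <= x <= b].

Definition Delta (a b : R) (X : set R) : \bar R :=
  hausdorff_dist (X `&` cint a b) (cint a b).

Definition scale_shift (t s : R) (X : set R) : set R :=
  [set t * (x - s) | x in X].

End Defs.

(* Let G be the set of monomials p^a q^b.  Since ln p / ln q is irrational,
   Dirichlet's pigeonhole argument yields monomials p^m, q^n whose ratio lies
   in (1, rho) for any rho > 1, and chains of powers of that ratio show that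
   near 0 every z has an element of G in [z, rho z].  The attractor is closed
   and invariant under S_1, ..., S_4, so it contains their fixed points 0 and 1,
   hence every g in G and 1 - g; the affine map S_w, of some slope c > 0, sends
   these to S_w(0) + c g and S_w(1) - c g.  Blown up by t, the points t c g are
   eps-dense in [0, r] once t is large, which drives Delta to 0 on both sides. *)

From Pilot Require Import Defs.
From HB Require Import structures.
From mathcomp Require Import all_boot all_order all_algebra.
From mathcomp Require Import all_classical all_reals all_analysis.
From mathcomp Require Import lra ring.
Set Implicit Arguments. Unset Strict Implicit. Unset Printing Implicit Defensive.
Import Order.TTheory GRing.Theory Num.Theory.
Import numFieldTopology.Exports numFieldNormedType.Exports.
Local Open Scope classical_set_scope.
Local Open Scope ring_scope.

Section RealFacts.
Variable R : realType.

Lemma exists_expr_lt (x e : R) : 0 <= x < 1 -> 0 < e -> exists n, x ^+ n < e.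
Proof.
case/andP=> x0 x1 e0.
have /cvgr0_norm_lt/(_ _ e0)/filter_ex[n] : (GRing.exp x : R ^nat) @ \oo --> 0.
  by apply: cvg_expr; rewrite ger0_norm.
by rewrite ger0_norm ?exprn_ge0 //; exists n.
Qed.

Lemma exists_bracket (u : nat -> R) (z c : R) (k : nat) : 0 < c ->
  (forall i, u i <= c * u i.+1) -> z <= u 0%N -> u k < z ->
  exists2 i, (i < k)%N & z <= u i < c * z.
Proof.
move=> c0 uS zu0; elim: k => [|k IH] ukz; first by rewrite ltNge zu0 in ukz.
have [/IH[i ik hi] | zuk] := ltP (u k) z; first by exists i => //; exact: leqW.
by exists k => //; rewrite zuk (le_lt_trans (uS k)) // ltr_pM2l.
Qed.

Lemma pigeonhole_close (f : nat -> R) (N : nat) : (0 < N)%N ->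
  (forall i, 0 <= f i < 1) ->
  exists i j, (i < j <= N)%N /\ `|f j - f i| < N%:R^-1.
Proof.
move=> N0 f01; have N0r : 0 < N%:R :> R by rewrite ltr0n.
have Nf_ge0 i : 0 <= N%:R * f i by rewrite mulr_ge0 //; case/andP: (f01 i).
pose bin i := Num.truncn (N%:R * f i).
have bin_lt i : (bin i < N)%N.
  by rewrite truncn_lt_nat // gtr_pMr //; case/andP: (f01 i).
have /injectivePn[i [j neq_ij /(congr1 val)/= bij]] :
    ~~ injectiveb (fun i : 'I_N.+1 => Ordinal (bin_lt i)).
  by apply/injectiveP => /leq_card; rewrite !card_ord ltnn.
have close : `|f j - f i| < N%:R^-1.
  have := truncn_itv (Nf_ge0 i); have := truncn_itv (Nf_ge0 j).
  rewrite -/(bin i) -/(bin j) bij -!natr1 => hj hi.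
  have h : `|N%:R * (f j - f i)| < 1 by rewrite ltr_norml; apply/andP; split; lra.
  by rewrite normrM gtr0_norm // -ltr_pdivlMl // mulr1 in h.
have [ij | ji | /val_inj eij] := ltngtP i j; last by rewrite eij eqxx in neq_ij.
- by exists i, j; rewrite ij -ltnS ltn_ord.
- by exists j, i; rewrite ji -ltnS ltn_ord distrC.
Qed.

Lemma irrational_near_nat (a e : R) : 0 < a -> (forall x : rat, a != ratr x) ->
  0 < e -> exists m n : nat, 0 < `|m%:R * a - n%:R| < e.
Proof.
move=> a0 a_irr e0.
pose N := (Num.truncn e^-1).+1.
have Ne : N%:R^-1 < e.
  by rewrite invf_plt ?posrE ?ltr0n // truncnS_gt.
pose fl i := Num.truncn (i%:R * a).
have ia_ge0 i : 0 <= i%:R * a by rewrite mulr_ge0 // ltW.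
have [i [j [/andP[ij _] close]]] :
    exists i j, (i < j <= N)%N /\
      `|(j%:R * a - (fl j)%:R) - (i%:R * a - (fl i)%:R)| < N%:R^-1.
  apply: pigeonhole_close => // k.
  by have := truncn_itv (ia_ge0 k); rewrite -natr1 /fl; lra.
have fl_le : (fl i <= fl j)%N by rewrite le_truncn // ler_pM2r // ler_nat ltnW.
exists (j - i)%N, (fl j - fl i)%N.
have -> : (j - i)%:R * a - (fl j - fl i)%:R =
    j%:R * a - (fl j)%:R - (i%:R * a - (fl i)%:R) :> R.
  by rewrite !natrB ?(ltnW ij) //; ring.
rewrite (lt_trans close Ne) andbT normr_gt0 subr_eq0; apply/negP => /eqP E.
have ji0 : (j - i)%:R != 0 :> R by rewrite pnatr_eq0 -lt0n subn_gt0.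
have : a = ratr ((fl j - fl i)%:R / (j - i)%:R).
  rewrite fmorph_div !rmorph_nat; apply: (mulIf ji0).
  by rewrite divfK // mulrC !natrB ?(ltnW ij) //; lra.
by apply/eqP; rewrite a_irr.
Qed.

Lemma ln_gap (x y rho : R) : 0 < x -> 0 < y -> 0 < rho ->
  0 < `|ln y - ln x| < ln rho -> x < y < rho * x \/ y < x < rho * y.
Proof.
move=> x0 y0 rho0 /andP[gap0 gap].
have lnrx : ln (rho * x) = ln rho + ln x by rewrite lnM ?posrE.
have lnry : ln (rho * y) = ln rho + ln y by rewrite lnM ?posrE.
have [xy|yx|xy] := ltgtP (ln x) (ln y).
- rewrite gtr0_norm ?subr_gt0 // in gap; left.
  by rewrite -ltr_ln ?posrE // xy -ltr_ln ?posrE ?mulr_gt0 // lnrx; lra.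
- rewrite ltr0_norm ?subr_lt0 // in gap; right.
  by rewrite -ltr_ln ?posrE // yx -ltr_ln ?posrE ?mulr_gt0 // lnry; lra.
- by rewrite xy subrr normr0 ltxx in gap0.
Qed.

End RealFacts.

Section MonomialDensity.
Variable R : realType.

Definition monomials (p q : R) : set R :=
  [set x | exists a b : nat, x = p ^+ a * q ^+ b].

Lemma monomialsC (p q : R) : monomials p q = monomials q p.
Proof. by apply/seteqP; split=> _ [a [b ->]]; exists b, a; rewrite mulrC. Qed.

Definition near0_ratio_dense (G : set R) (rho : R) :=
  exists2 u0 : R, 0 < u0 &
    forall z, 0 < z <= u0 -> exists2 g, G g & z <= g <= rho * z.

Lemma monomials_ratio_dense_of_gap (p q rho : R) (m n : nat) :
  0 < p -> 0 < q < 1 -> p ^+ m < q ^+ n <= rho * p ^+ m ->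
  near0_ratio_dense (monomials p q) rho.
Proof.
move=> p0 /andP[q0 q1] /andP[pq qp].
have pm0 : 0 < p ^+ m by exact: exprn_gt0.
have qn0 : 0 < q ^+ n by exact: exprn_gt0.
pose mu := p ^+ m / q ^+ n.
have mu0 : 0 < mu by exact: divr_gt0.
have mu1 : mu < 1 by rewrite ltr_pdivrMr // mul1r.
have rho_mu : 1 <= rho * mu by rewrite mulrA ler_pdivlMr // mul1r.
have [k muk] : exists k, mu ^+ k < q by apply: exists_expr_lt; rewrite ?(ltW mu0).
(* Below q^N the chain q^N mu^j, j <= k, falls under q^(N+1) by factors
   mu >= 1/rho, and q^N mu^j = p^(m j) q^(N - n j) is a monomial when n k <= N. *)
exists (q ^+ (n * k).+1); first exact: exprn_gt0.
move=> z /andP[z0 zu0].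
have qS i : q ^+ i = q^-1 * q ^+ i.+1 by rewrite exprS mulKf ?gt_eqF.
have [i qiz] : exists i, q ^+ i < z by apply: exists_expr_lt; rewrite ?(ltW q0).
have [N _ /andP[zqN qNz]] : exists2 N, (N < i)%N & z <= q ^+ N < q^-1 * z.
  apply: (@exists_bracket _ (GRing.exp q) _ _ i) => // [|j|].
  - by rewrite invr_gt0.
  - by rewrite qS.
  - by rewrite expr0 (le_trans zu0) // exprn_ile1 // ltW.
have qN1z : q ^+ N.+1 < z by rewrite qS ltr_pM2l ?invr_gt0 in qNz.
have nkN : (n * k < N)%N.
  rewrite -(ltr_iXn2l q0 q1) (qS (n * k)) (lt_le_trans qNz) // ler_pM2l ?invr_gt0 //.
have [j jk /andP[zg grz]] : exists2 j, (j < k)%N & z <= q ^+ N * mu ^+ j < rho * z.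
  apply: (@exists_bracket _ (fun j => q ^+ N * mu ^+ j) _ _ k) => [|j||].
  - by rewrite -(pmulr_lgt0 _ mu0) (lt_le_trans ltr01).
  - rewrite [rho * _](_ : _ = rho * mu * (q ^+ N * mu ^+ j)); last by rewrite exprS; ring.
    by rewrite ler_peMl // mulr_ge0 ?exprn_ge0 ?ltW.
  - by rewrite expr0 mulr1.
  - by rewrite (lt_trans _ qN1z) // exprSr ltr_pM2l ?exprn_gt0.
exists (q ^+ N * mu ^+ j); last by rewrite zg ltW.
have njN : (n * j <= N)%N.
  by rewrite ltnW // (leq_ltn_trans _ nkN) // leq_mul2l ltnW ?orbT.
exists (m * j)%N, (N - n * j)%N.
rewrite expr_div_n -!exprM -{1}(subnK njN) exprD.
by field; rewrite expf_neq0 ?gt_eqF.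
Qed.

Lemma monomials_ratio_dense (p q rho : R) : 0 < p < 1 -> 0 < q < 1 ->
  (forall x : rat, ln p / ln q != ratr x) -> 1 < rho ->
  near0_ratio_dense (monomials p q) rho.
Proof.
move=> /andP[p0 p1] /andP[q0 q1] irr rho1.
have lnp : 0 < - ln p by rewrite oppr_gt0 ln_lt0 // p0.
have lnq : 0 < - ln q by rewrite oppr_gt0 ln_lt0 // q0.
have a0 : 0 < ln p / ln q by rewrite -mulrNN -invrN divr_gt0.
have e0 : 0 < ln rho / - ln q by rewrite divr_gt0 ?ln_gt0.
have [m [n /andP[gap0 gap]]] := irrational_near_nat a0 irr e0.
have lnE : ln (q ^+ n) - ln (p ^+ m) = - ln q * (m%:R * (ln p / ln q) - n%:R).
  rewrite !lnXn // -[ln q *+ n]mulr_natr -[ln p *+ m]mulr_natr.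
  by field; rewrite lt_eqF // -oppr_gt0.
have [/andP[pq qp] | /andP[qp pq]] :
    p ^+ m < q ^+ n < rho * p ^+ m \/ q ^+ n < p ^+ m < rho * q ^+ n.
  apply: ln_gap; [exact: exprn_gt0 | exact: exprn_gt0 | lra |].
  rewrite lnE normrM gtr0_norm // pmulr_rgt0 ?gap0 //=.
  by rewrite mulrC -ltr_pdivlMr.
- by apply: (@monomials_ratio_dense_of_gap p q rho m n); rewrite ?q0 ?pq ?ltW.
- rewrite monomialsC.
  by apply: (@monomials_ratio_dense_of_gap q p rho n m); rewrite ?p0 ?qp ?ltW.
Qed.

Lemma ratio_dense_scaled_approx (G : set R) (r e : R) : 0 < r -> 0 < e ->
  (forall rho, 1 < rho -> near0_ratio_dense G rho) ->
  exists2 T0 : R, 0 < T0 & forall T, T0 <= T -> forall x, 0 <= x <= r ->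
    exists2 g, G g & 0 <= T * g <= r /\ `|x - T * g| <= e.
Proof.
move=> r0 e0 G_dense.
(* With rho = 1 + e / r, any point of [y / rho, y] is within e of y <= r. *)
pose d := e / r; have d0 : 0 < d by exact: divr_gt0.
have eE : e = d * r by rewrite /d divfK ?gt_eqF.
have [|u0 u00 Gu0] := G_dense (1 + d); first by rewrite ltrDl.
exists (r / u0); first exact: divr_gt0.
move=> T rT x /andP[x0 xr].
have T0 : 0 < T := lt_le_trans (divr_gt0 r0 u00) rT.
have rTu0 : r <= T * u0 by rewrite -ler_pdivrMr.
have below y : 0 < y <= r ->
    exists2 g, G g & [/\ 0 < T * g, y - e <= T * g & T * g <= y].
  move=> /andP[y0 yr]; have rhoT0 : 0 < (1 + d) * T by rewrite mulr_gt0 ?addr_gt0.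
  have [|g Gg /andP[zg grz]] := Gu0 (y / ((1 + d) * T)).
    rewrite divr_gt0 //= ler_pdivrMr // mulrCA (le_trans yr) // (le_trans rTu0) //.
    by rewrite [u0 * T]mulrC ler_peMl ?mulr_ge0 ?ltW //; lra.
  rewrite ler_pdivrMr // in zg.
  rewrite (_ : (1 + d) * _ = y / T) in grz; last first.
    by field; rewrite !gt_eqF ?addr_gt0.
  exists g => //; split; [nra | nra | by rewrite mulrC -ler_pdivlMr].
have [x_gt0 | x_le0] := ltP 0 x.
  have [|g Gg [gt0 lo hi]] := below x; first by rewrite x_gt0.
  exists g => //; split; first by apply/andP; split; lra.
  by rewrite ger0_norm ?subr_ge0 //; lra.
have [|g Gg [gt0 _ hi]] := below (Num.min e r).
  by rewrite lt_min e0 r0 ge_min lexx orbT.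
move: hi; rewrite le_min => /andP[ge gr].
exists g => //; split; first by apply/andP; split; lra.
by rewrite (_ : x = 0) ?sub0r ?normrN ?gtr0_norm //; lra.
Qed.

End MonomialDensity.

Section HausdorffDelta.
Variable R : realType.

Lemma edist_ge0 (x : R) (B : set R) : (0 <= Defs.edist x B)%E.
Proof. by apply/ereal_infP => _ [y _ <-]; rewrite lee_fin. Qed.

Lemma Delta_ge0 (a b : R) (X : set R) : a <= b -> (0 <= Delta a b X)%E.
Proof.
move=> ab; rewrite /Delta /hausdorff_dist le_max; apply/orP; right.
apply: ereal_sup_ge; exists (Defs.edist a (X `&` cint a b)); last exact: edist_ge0.
by exists a => //; rewrite /cint /= lexx ab.
Qed.

Lemma Delta_le (a b e : R) (X : set R) : 0 <= e ->
  (forall x, a <= x <= b -> exists2 v, X v & a <= v <= b /\ `|x - v| <= e) ->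
  (Delta a b X <= e%:E)%E.
Proof.
move=> e0 X_dense; rewrite /Delta /hausdorff_dist ge_max; apply/andP; split.
  apply: ge_ereal_sup => _ [v [Xv abv] <-].
  apply: ge_ereal_inf; exists (`|v - v|%:E); first by exists v.
  by rewrite subrr normr0 lee_fin.
apply: ge_ereal_sup => _ [x abx <-].
have [v Xv [abv xv]] := X_dense x abx.
by apply: ge_ereal_inf; exists (`|x - v|%:E); [exists v | rewrite lee_fin].
Qed.

Lemma Delta_cvg0 (a b : R) (X : R -> set R) : a <= b ->
  (forall e, 0 < e -> exists M : R, forall t, M <= t -> forall x, a <= x <= b ->
     exists2 v, X t v & a <= v <= b /\ `|x - v| <= e) ->
  Delta a b (X t) @[t --> +oo] --> 0%E.
Proof.
move=> ab X_dense.
have Delta_near e : 0 < e -> \forall t \near +oo, (0 <= Delta a b (X t) <= e%:E)%E.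
  move=> e0; have [M HM] := X_dense e e0.
  apply: filterS (nbhs_pinfty_ge (num_real M)) => t tM.
  by rewrite Delta_ge0 // Delta_le ?ltW //; exact: HM.
apply/fine_cvgP; split.
  apply: filterS (Delta_near 1 ltr01) => t /andP[D0 D1].
  by rewrite ge0_fin_numE // (le_lt_trans D1) // ltry.
apply/cvgrPdist_le => e e0; apply: filterS (Delta_near e e0) => t.
rewrite /comp /= sub0r normrN; case: (Delta a b (X t)) => [d||] /=.
- by rewrite !lee_fin => /andP[d0 de]; rewrite ger0_norm.
- by rewrite normr0 ltW.
- by rewrite normr0 ltW.
Qed.

End HausdorffDelta.

Section ScaledDelta.
Variables (R : realType) (G : set R) (X : R -> set R) (c r : R).
Hypotheses (c0 : 0 < c) (r0 : 0 < r).
Hypothesis G_dense : forall rho, 1 < rho -> near0_ratio_dense G rho.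

Lemma Delta_cvg0_right : (forall t g, G g -> X t (t * c * g)) ->
  Delta 0 r (X t) @[t --> +oo] --> 0%E.
Proof.
move=> XG; apply: Delta_cvg0 (ltW r0) _ => e e0.
have [T0 _ approx] := ratio_dense_scaled_approx r0 e0 G_dense.
exists (T0 / c) => t tT0 x x0r.
have [|g Gg [Tg0r xTg]] := approx (t * c) _ x x0r; first by rewrite -ler_pdivrMr.
by exists (t * c * g); first exact: XG.
Qed.

Lemma Delta_cvg0_left : (forall t g, G g -> X t (- (t * c * g))) ->
  Delta (- r) 0 (X t) @[t --> +oo] --> 0%E.
Proof.
move=> XG; apply: Delta_cvg0 _ _ => [|e e0]; first by rewrite oppr_le0 ltW.
have [T0 _ approx] := ratio_dense_scaled_approx r0 e0 G_dense.
exists (T0 / c) => t tT0 x /andP[rx x0].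
have [||g Gg [/andP[Tg0 Tgr] xTg]] := approx (t * c) _ (- x).
- by rewrite -ler_pdivrMr.
- by rewrite oppr_ge0 x0 lerNl.
exists (- (t * c * g)); first exact: XG.
split; first by rewrite lerN2 Tgr oppr_le0 Tg0.
by rewrite -normrN opprD opprK.
Qed.

End ScaledDelta.

Section Homothety.
Variable R : realType.

Definition homothety (y c x : R) := y + c * (x - y).

Lemma homothetyM (y c d x : R) :
  homothety y c (homothety y d x) = homothety y (c * d) x.
Proof. by rewrite /homothety; ring. Qed.

Variables (A : set R) (y : R).

Lemma homothety_expr_closed (c x : R) (n : nat) :
  (forall x, A x -> A (homothety y c x)) -> A x -> A (homothety y (c ^+ n) x).
Proof.
move=> Ac Ax; elim: n => [|n IH]; first by rewrite /homothety expr0 mul1r addrC subrK.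
by rewrite exprS -homothetyM; exact: Ac.
Qed.

Lemma homothety_center_closed (c : R) : closed A -> A !=set0 -> `|c| < 1 ->
  (forall x, A x -> A (homothety y c x)) -> A y.
Proof.
move=> A_closed [x Ax] c1 Ac.
apply: (@closed_cvg _ _ \oo _ (fun n => homothety y (c ^+ n) x) A A_closed).
  by apply: nearW => n; exact: homothety_expr_closed.
rewrite -[y in _ --> y]addr0 -(mul0r (x - y)).
by apply: cvgD; [exact: cvg_cst | apply: cvgMl; exact: cvg_expr].
Qed.

Lemma homothety_monomial_closed (p q x : R) (a b : nat) :
  (forall x, A x -> A (homothety y p x)) -> (forall x, A x -> A (homothety y q x)) ->
  A x -> A (homothety y (p ^+ a * q ^+ b) x).
Proof.
move=> Ap Aq Ax; rewrite -homothetyM.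
by apply: homothety_expr_closed => //; exact: homothety_expr_closed.
Qed.

End Homothety.

Section Attractor.
Variables (R : realType) (p q : R).

Lemma Sword_affine (w : seq 'I_4) : 0 < p -> 0 < q ->
  exists2 c : R, 0 < c & forall x, Sword p q w x = Sword p q w 0 + c * x.
Proof.
move=> p0 q0; elim: w => [|i w [c c0 IH]]; first by exists 1 => // x; rewrite add0r mul1r.
have [ci ci0 Si] : exists2 ci, 0 < ci & forall x, Smap p q i x = Smap p q i 0 + ci * x.
  by case: i => [[|[|[|[|//]]]] ?]; [exists p | exists q | exists p | exists q] => // x;
    rewrite /Smap /=; ring.
exists (ci * c) => [|x]; first exact: mulr_gt0.
by rewrite /= IH Si [Smap p q i (Sword p q w 0)]Si; ring.
Qed.

Variable K : set R.
Hypothesis K_attractor : is_attractor p q K.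

Lemma attractor_Smap (i : 'I_4) (x : R) : K x -> K (Smap p q i x).
Proof. by case: K_attractor => _ _ KE Kx; rewrite KE; exists i => //; exists x. Qed.

Lemma attractor_Sword (w : seq 'I_4) (x : R) : K x -> K (Sword p q w x).
Proof. by elim: w => //= i w IH Kx; apply/attractor_Smap/IH. Qed.

Lemma attractor_monomials (g : R) : 0 < p < 1 -> 0 < q < 1 ->
  monomials p q g -> K g /\ K (1 - g).
Proof.
move=> /andP[p0 p1] /andP[q0 q1] [a [b ->]].
have K_homothety (i : 'I_4) y c : (forall x, Smap p q i x = homothety y c x) ->
    forall x, K x -> K (homothety y c x).
  by move=> Si x /(attractor_Smap i); rewrite Si.
have Kp0 x : K x -> K (homothety 0 p x).
  by apply: (K_homothety (@Ordinal 4 0 isT)) => {}x; rewrite /homothety /Smap /=; ring.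
have Kq0 x : K x -> K (homothety 0 q x).
  by apply: (K_homothety (@Ordinal 4 1 isT)) => {}x; rewrite /homothety /Smap /=; ring.
have Kp1 x : K x -> K (homothety 1 p x).
  by apply: (K_homothety (@Ordinal 4 2 isT)) => {}x; rewrite /homothety /Smap /=; ring.
have Kq1 x : K x -> K (homothety 1 q x).
  by apply: (K_homothety (@Ordinal 4 3 isT)) => {}x; rewrite /homothety /Smap /=; ring.
have [K_compact K_nonempty _] := K_attractor.
have K_closed := compact_closed (@Rhausdorff R) K_compact.
have p_lt1 : `|p| < 1 by rewrite gtr0_norm.
have K0 := homothety_center_closed K_closed K_nonempty p_lt1 Kp0.
have K1 := homothety_center_closed K_closed K_nonempty p_lt1 Kp1.
split.
- have := homothety_monomial_closed a b Kp0 Kq0 K1.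
  by rewrite /homothety !subr0 mulr1 add0r.
- have := homothety_monomial_closed a b Kp1 Kq1 K0.
  by rewrite /homothety sub0r mulrN1 addrC.
Qed.

End Attractor.

Unset Implicit Arguments.

Theorem corollary8 (R : realType) (p q : R)
  (hp : 0 < p < 1 / 2) (hq : 0 < q < 1 / 2)
  (hirr : forall x : rat, ln p / ln q != ratr x)
  (K : set R) (hK : is_attractor p q K)
  (r : R) (hr : 0 < r) (w : seq 'I_4) (hw : w != [::]) :
  (Delta 0 r (scale_shift t (Sword p q w 0) K) @[t --> +oo] --> 0%E) /\
  (Delta (- r) 0 (scale_shift t (Sword p q w 1) K) @[t --> +oo] --> 0%E).
Proof.
have p01 : 0 < p < 1 by case/andP: hp => p0 p_lt; rewrite p0; lra.
have q01 : 0 < q < 1 by case/andP: hq => q0 q_lt; rewrite q0; lra.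
have G_dense rho := @monomials_ratio_dense R p q rho p01 q01 hirr.
have [p0 _] := andP p01; have [q0 _] := andP q01.
have [c c0 Sw] := Sword_affine w p0 q0.
split.
- apply: (Delta_cvg0_right c0 hr G_dense).
  move=> t g /(attractor_monomials hK p01 q01)[Kg _].
  exists (Sword p q w g); first exact: attractor_Sword.
  by rewrite Sw addrC addKr mulrA.
- apply: (Delta_cvg0_left c0 hr G_dense).
  move=> t g /(attractor_monomials hK p01 q01)[_ K1g].
  exists (Sword p q w (1 - g)); first exact: attractor_Sword.
  by rewrite Sw [Sword p q w 1]Sw; ring.
Qed.
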